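(* Fix a constant $0<\alpha<1$. There exist constants $c>0$ and $n_0$ (depending only on $\alpha$) such that for all $n\ge n_0$, all $D$ with $1\le D\le \alpha n$, and all $k$ with $0<k\le D$: if a deterministic algorithm together with advice assignments accomplishes (even anonymous) topology recognition within time $D-k$ on every graph of size $n$ and diameter $D$, then the size of advice is at least $c\,(n^2\log n)/(D-k+1)$. That is, the size of advice needed is in $\Omega((n^2\log n)/(D-k+1))$.
   Context: Graphs are finite, simple, undirected, connected, with no node labels; at each node of degree $d$ the incident edges carry distinct port numbers $0,\dots,d-1$ (no coherence between endpoints). Isomorphism is a bijection of nodes preserving edges and port numbers at both endpoints. Size = number of nodes; $\log$ is base 2. Communication model (LOCAL): synchronous rounds, all nodes start simultaneously; in each round every node may send arbitrary messages to all neighbours, receives their messages (knowing the arrival port), and performs arbitrary local computation. Initially a node knows only its degree and its advice. Advice: an oracle knowing the graph assigns each node a binary string; the size of advice is the maximum string length. All nodes run the same deterministic algorithm. Anonymous topology recognition: every node outputs a port-labeled graph isomorphic to $G$. Time is the number of rounds until all nodes have output. *)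

From Stdlib Require Import Reals.
From mathcomp Require Import all_boot.
Set Implicit Arguments. Unset Strict Implicit. Unset Printing Implicit Defensive.

(** Port-labeled graph on nodes 'I_n: node v has degree [deg v], and the edge
    at port p (for p < deg v) leads to [nbr v p]. Values of [nbr v p] for
    p >= deg v are irrelevant (never used). *)
Record pgraph (n : nat) : Type := PGraph {
  deg : 'I_n -> nat;
  nbr : 'I_n -> nat -> 'I_n
}.

Definition adj n (G : pgraph n) (u v : 'I_n) : Prop :=
  exists2 p, p < deg G u & nbr G u p = v.

Fixpoint reach n (G : pgraph n) (k : nat) (u v : 'I_n) : Prop :=
  match k with
  | 0 => u = v
  | k'.+1 => reach G k' u v \/ exists w, reach G k' u w /\ adj G w v
  end.

Definition connected n (G : pgraph n) : Prop :=
  forall u v : 'I_n, exists k, reach G k u v.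

Definition wf_pgraph n (G : pgraph n) : Prop :=
  [/\ (forall v p, p < deg G v -> nbr G v p <> v),
      (forall v p q, p < deg G v -> q < deg G v -> nbr G v p = nbr G v q -> p = q),
      (forall v p, p < deg G v ->
         exists2 q, q < deg G (nbr G v p) & nbr G (nbr G v p) q = v)
    & connected G].

(** G has diameter D: every pair of nodes is at distance <= D and some pair
    is at distance > D-1 (i.e. exactly D); meant for D >= 1. *)
Definition has_diameter n (G : pgraph n) (D : nat) : Prop :=
  (forall u v, reach G D u v) /\ exists u v, ~ reach G D.-1 u v.

Definition pg_iso n m (G : pgraph n) (H : pgraph m) : Prop :=
  exists f : 'I_n -> 'I_m, bijective f /\
    forall v, deg H (f v) = deg G v /\
      forall p, p < deg G v -> nbr H (f v) p = f (nbr G v p).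

Definition rport n (G : pgraph n) (v : 'I_n) (p : nat) : nat :=
  let u := nbr G v p in find (fun q => nbr G u q == v) (iota 0 (deg G u)).

(** A node starts knowing only its degree and its advice; in each round it
    sends a message on every port, receives the list of messages indexed by
    arrival port (length = its degree), and updates its state. [out] gives
    the node's output (None = not yet output). *)
Record algo (S M : Type) : Type := Algo {
  a_init : nat -> seq bool -> S;
  a_msg : S -> nat -> M;
  a_trans : S -> seq M -> S;
  a_out : S -> option {m : nat & pgraph m}
}.

Fixpoint run S M (A : algo S M) n (G : pgraph n) (adv : 'I_n -> seq bool)
    (t : nat) : 'I_n -> S :=
  match t with
  | 0 => fun v => a_init A (deg G v) (adv v)
  | t'.+1 => fun v =>
      let st := run A G adv t' in
      a_trans A (st v)
        [seq a_msg A (st (nbr G v p)) (rport G v p) | p <- iota 0 (deg G v)]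
  end.

Definition recognizes S M (A : algo S M) n (G : pgraph n)
    (adv : 'I_n -> seq bool) (T : nat) : Prop :=
  forall v : 'I_n, exists t, t <= T /\
    (forall t', t' < t -> a_out A (run A G adv t' v) = None) /\
    exists H, a_out A (run A G adv t v) = Some H /\ pg_iso G (projT2 H).

Definition advice_size n (adv : 'I_n -> seq bool) : nat :=
  \max_(v < n) size (adv v).

Definition log2R (x : R) : R := Rdiv (ln x) (ln (INR 2)).

From Stdlib Require Import Reals Lra ClassicalEpsilon.
From mathcomp Require Import all_boot fingroup perm zify.
Set Implicit Arguments. Unset Strict Implicit. Unset Printing Implicit Defensive.

(* The hard instances are lollipops: a path [0..L] whose end, the hub, lies in a
   clique of size [q+1], with the ports inside the clique numbered by [q] arbitrary
   permutations of ['I_q].  These are [(q!)^q] graphs of diameter [L+1] on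
   [n = L+q+1] nodes.  Within [T <= L] rounds node 0 sees only the path and the
   advice of nodes [0..T], yet its output, together with the position of the hub in
   it, determines every clique port.  Hence [(q!)^q <= ((b+1) 2^b)^(T+1) n] for
   advice size [b], and since [D <= alpha n] makes [q] a fixed fraction of [n],
   taking logarithms yields [n^2 log n = O(b (T+1))]. *)

Lemma reach_refl n (G : pgraph n) k u : reach G k u u.
Proof. by elim: k => [|k IH] //=; left. Qed.

Lemma reach_trans n (G : pgraph n) k1 k2 u w v :
  reach G k1 u w -> reach G k2 w v -> reach G (k1 + k2) u v.
Proof.
move=> Huw; elim: k2 v => [|k2 IH] v /=; first by move=> <-; rewrite addn0.
rewrite addnS /=; case=> [H | [w' [H Hadj]]]; first by left; apply: IH.
by right; exists w'; split => //; apply: IH.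
Qed.

Lemma reach_mono n (G : pgraph n) k k' u v : k <= k' -> reach G k u v -> reach G k' u v.
Proof. by move=> /subnK <- H; rewrite addnC; apply: reach_trans H (reach_refl _ _ _). Qed.

Lemma reach_adj n (G : pgraph n) u v : adj G u v -> reach G 1 u v.
Proof. by move=> H; right; exists u. Qed.

Lemma reach_sym n (G : pgraph n) k u v : (forall x y, adj G x y -> adj G y x) ->
  reach G k u v -> reach G k v u.
Proof.
move=> adj_sym; elim: k v => [|k IH] v; first by move=> /= ->.
case=> [H | [w [H Hwv]]]; first by apply: reach_mono (IH _ H).
by rewrite -add1n; apply: reach_trans (reach_adj (adj_sym _ _ Hwv)) (IH _ H).
Qed.

Definition port_perm q (sg : {ffun 'I_q -> {perm 'I_q}}) (r p : nat) : nat :=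
  match (insub r : option 'I_q), (insub p : option 'I_q) with
  | Some r', Some p' => sg r' p' | _, _ => 0
  end.

Section PortPerm.
Variables (q : nat) (sg : {ffun 'I_q -> {perm 'I_q}}).

Lemma port_permE (r p : 'I_q) : port_perm sg r p = sg r p.
Proof. by rewrite /port_perm !valK. Qed.

Lemma port_perm_lt r p : r < q -> p < q -> port_perm sg r p < q.
Proof. by move=> Hr Hp; rewrite -[r]/(Ordinal Hr : nat) -[p]/(Ordinal Hp : nat) port_permE. Qed.

Lemma port_perm_inj r p1 p2 : r < q -> p1 < q -> p2 < q ->
  port_perm sg r p1 = port_perm sg r p2 -> p1 = p2.
Proof.
move=> Hr H1 H2; rewrite -[r]/(Ordinal Hr : nat) -[p1]/(Ordinal H1 : nat).
by rewrite -[p2]/(Ordinal H2 : nat) !port_permE => /val_inj/perm_inj [].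
Qed.

Lemma port_perm_surj r x : r < q -> x < q -> exists2 p, p < q & port_perm sg r p = x.
Proof.
move=> Hr Hx; exists ((sg (Ordinal Hr))^-1%g (Ordinal Hx)) => //.
by rewrite -[r]/(Ordinal Hr : nat) port_permE permKV.
Qed.

End PortPerm.

(* Nodes [0..L] form a path ending at the hub [L], and the hub together with
   [L+1..L+q] forms a clique.  On the path port 0 points towards the hub; the hub
   reaches [L+1+p] through port [p]; clique node [L+i] numbers its ports through
   the permutation [sg (i-1)] of ['I_q], and [bump i] skips the node itself. *)
Definition lol_deg (L q u : nat) : nat :=
  if u < L then (if u == 0 then 1 else 2)
  else if u == L then (if 0 < L then q.+1 else q) else q.

Definition lol_nbr L q (sg : {ffun 'I_q -> {perm 'I_q}}) (u p : nat) : nat :=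
  if u < L then (if p == 0 then u.+1 else u.-1)
  else if u == L then (if p < q then L + p.+1 else L.-1)
  else L + bump (u - L) (port_perm sg (u - L).-1 p).
Arguments lol_nbr : clear implicits.

Definition lollipop L q (sg : {ffun 'I_q -> {perm 'I_q}}) : pgraph (L + q).+1 :=
  PGraph (fun u => lol_deg L q u) (fun u p => inord (lol_nbr L q sg u p)).
Arguments lollipop : clear implicits.

Section Lollipop.
Variables (L q : nat) (sg : {ffun 'I_q -> {perm 'I_q}}).
Hypothesis q_gt0 : 0 < q.
Local Notation G := (lollipop L q sg).
Local Notation node i := (@inord (L + q) i).

Lemma lol_deg_path u : u < L -> lol_deg L q u = if u == 0 then 1 else 2.
Proof. by move=> H; rewrite /lol_deg H. Qed.

Lemma lol_deg_hub : lol_deg L q L = if 0 < L then q.+1 else q.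
Proof. by rewrite /lol_deg ltnn eqxx. Qed.

Lemma lol_deg_clique u : L < u -> lol_deg L q u = q.
Proof. by move=> H; rewrite /lol_deg ltnNge ltnW //= gtn_eqF. Qed.

Lemma lol_nbr_path u p : u < L -> lol_nbr L q sg u p = if p == 0 then u.+1 else u.-1.
Proof. by move=> H; rewrite /lol_nbr H. Qed.

Lemma lol_nbr_hub p : lol_nbr L q sg L p = if p < q then L + p.+1 else L.-1.
Proof. by rewrite /lol_nbr ltnn eqxx. Qed.

Lemma lol_nbr_clique u p : L < u ->
  lol_nbr L q sg u p = L + bump (u - L) (port_perm sg (u - L).-1 p).
Proof. by move=> H; rewrite /lol_nbr ltnNge ltnW //= gtn_eqF. Qed.

Lemma lol_nbr_lt u p : u < (L + q).+1 -> p < lol_deg L q u ->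
  lol_nbr L q sg u p < (L + q).+1.
Proof.
move=> Hu; rewrite /lol_deg /lol_nbr.
case: (ltnP u L) => H1; first by case: (u =P 0); case: (p =P 0); lia.
case: (u =P L) => H2; first by case: (ltnP p q); case: (posnP L); lia.
move=> Hp; have Hr : (u - L).-1 < q by lia.
have := port_perm_lt sg Hr Hp.
rewrite /bump; case: leqP; lia.
Qed.

Lemma lol_nbrE (u : 'I_(L + q).+1) p : p < lol_deg L q u ->
  nbr G u p = lol_nbr L q sg u p :> nat.
Proof. by move=> Hp; rewrite /= inordK // lol_nbr_lt. Qed.

Lemma lol_adjP (u w : 'I_(L + q).+1) :
  adj G u w <-> exists2 p, p < lol_deg L q u & lol_nbr L q sg u p = w.
Proof.
split; first by case=> p Hp <-; exists p => //; rewrite -lol_nbrE.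
by case=> p Hp Hw; exists p => //; apply: ord_inj; rewrite -Hw /= inordK // lol_nbr_lt.
Qed.

Lemma lol_nbr_clique_onto u w : L <= u -> L <= w -> u <> w -> u < (L + q).+1 ->
  w < (L + q).+1 -> exists2 p, p < lol_deg L q u & lol_nbr L q sg u p = w.
Proof.
move=> Lu Lw uw Hu Hw; rewrite /lol_deg /lol_nbr.
case: (ltnP u L) => H1; first lia.
case: (u =P L) => H2.
  exists (w - L).-1; first by case: (posnP L); lia.
  by case: ltnP; lia.
have Hx : unbump (u - L) (w - L) < q by rewrite /unbump; case: ltnP; lia.
have Hr : (u - L).-1 < q by lia.
have [p Hp Hpe] := port_perm_surj sg Hr Hx.
by exists p => //; rewrite Hpe unbumpKcond; case: (w - L =P u - L) => /=; lia.
Qed.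

Lemma lol_nbr_sym u p : u < (L + q).+1 -> p < lol_deg L q u ->
  exists2 p', p' < lol_deg L q (lol_nbr L q sg u p) &
    lol_nbr L q sg (lol_nbr L q sg u p) p' = u.
Proof.
move=> Hu Hp; have Hw := lol_nbr_lt Hu Hp.
case: (ltngtP u L) => H1.
- rewrite lol_nbr_path // in Hw *; rewrite lol_deg_path // in Hp.
  case: (p =P 0) => Hp0 in Hw *.
    case: (ltngtP u.+1 L) => H2; last 1 first.
    + rewrite H2; exists q; rewrite ?lol_deg_hub ?lol_nbr_hub ?ltnn; last lia.
      by case: posnP; lia.
    + by exists 1; rewrite ?lol_deg_path ?lol_nbr_path.
    + lia.
  have Hu0 : u <> 0 by move: Hp; case: eqP; lia.
  exists 0; first by rewrite lol_deg_path; [case: eqP | lia].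
  by rewrite lol_nbr_path /=; lia.
- rewrite lol_nbr_clique // in Hw *.
  apply: lol_nbr_clique_onto => //; try lia.
  by have := neq_bump (u - L) (port_perm sg (u - L).-1 p); move/eqP; lia.
- subst u; rewrite lol_deg_hub in Hp; rewrite lol_nbr_hub in Hw *.
  case: (ltnP p q) => H3 in Hw *; first by apply: lol_nbr_clique_onto; lia.
  have HL : 0 < L by move: Hp; case: posnP; lia.
  exists 0; first by rewrite lol_deg_path; [case: eqP | lia].
  by rewrite lol_nbr_path /=; lia.
Qed.

Lemma lol_nbr_neq u p : u < (L + q).+1 -> p < lol_deg L q u -> lol_nbr L q sg u p <> u.
Proof.
move=> Hu; rewrite /lol_deg /lol_nbr.
case: (ltnP u L) => H1; first by case: (u =P 0); case: (p =P 0); lia.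
case: (u =P L) => H2; first by case: (ltnP p q); case: (posnP L); lia.
by have := neq_bump (u - L) (port_perm sg (u - L).-1 p); move/eqP; lia.
Qed.

Lemma lol_nbr_inj u p1 p2 : u < (L + q).+1 -> p1 < lol_deg L q u -> p2 < lol_deg L q u ->
  lol_nbr L q sg u p1 = lol_nbr L q sg u p2 -> p1 = p2.
Proof.
move=> Hu; rewrite /lol_deg /lol_nbr.
case: (ltnP u L) => H1.
  by case: (u =P 0); case: (p1 =P 0); case: (p2 =P 0); lia.
case: (u =P L) => H2; first by case: (ltnP p1 q); case: (ltnP p2 q); case: (posnP L); lia.
move=> Hp1 Hp2 /addnI /(can_inj (bumpK _)).
by apply: port_perm_inj Hp1 Hp2; lia.
Qed.

Lemma lol_adj_sym u w : adj G u w -> adj G w u.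
Proof.
move=> /lol_adjP [p Hp Hw]; apply/lol_adjP.
by have [p' Hp' Hu] := lol_nbr_sym (ltn_ord u) Hp; exists p'; rewrite -Hw.
Qed.

Lemma lol_adj_clique (u w : 'I_(L + q).+1) : L <= u -> L <= w -> u <> w :> nat -> adj G u w.
Proof. by move=> Lu Lw uw; apply/lol_adjP/lol_nbr_clique_onto. Qed.

Lemma lol_adj_succ i : i < L -> adj G (node i) (node i.+1).
Proof.
move=> Hi; apply/lol_adjP; exists 0; rewrite !inordK ?lol_deg_path ?lol_nbr_path //; try lia.
by case: eqP.
Qed.

Lemma lol_reach_path i d : i + d <= L -> reach G d (node i) (node (i + d)).
Proof.
elim: d => [|d IH] H; first by rewrite addn0; apply: reach_refl.
rewrite addnS -[d.+1]addn1; apply: reach_trans (IH _) (reach_adj (lol_adj_succ _)); lia.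
Qed.

Lemma lol_diam_upper (u v : 'I_(L + q).+1) : reach G L.+1 u v.
Proof.
wlog uv : u v / u <= v.
  move=> Hwlog; case: (leqP u v) => [|/ltnW] /Hwlog //.
  exact/reach_sym/lol_adj_sym.
case: (leqP v L) => vL.
  have Hd : u + (v - u) <= L by lia.
  have := lol_reach_path Hd.
  by rewrite subnKC // !inord_val; apply: reach_mono; lia.
case: (leqP u L) => uL.
  have Hd : u + (L - u) <= L by lia.
  have := lol_reach_path Hd; rewrite subnKC // inord_val => Hpath.
  have Hhub : adj G (node L) v by apply: lol_adj_clique; rewrite ?inordK; lia.
  have := reach_trans Hpath (reach_adj Hhub).
  by apply: reach_mono; lia.
case: (u =P v :> nat) => [/val_inj <- | uv']; first exact: reach_refl.
by apply: reach_mono (reach_adj (lol_adj_clique _ _ uv')); lia.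
Qed.

Lemma lol_depth_adj (w v : 'I_(L + q).+1) : adj G w v -> minn v L.+1 <= (minn w L.+1).+1.
Proof.
case/lol_adjP => p Hp <-; case: (ltngtP w L) => H1.
- by rewrite lol_nbr_path //; case: (p =P 0); lia.
- lia.
- by rewrite H1 lol_nbr_hub; case: ltnP; lia.
Qed.

Lemma lol_depth_reach k (u v : 'I_(L + q).+1) :
  reach G k u v -> minn v L.+1 <= minn u L.+1 + k.
Proof.
elim: k v => [|k IH] v /=; first by move=> ->; rewrite addn0.
case=> [H | [w [H Hwv]]]; first by have := IH _ H; lia.
by have := IH _ H; have := lol_depth_adj Hwv; lia.
Qed.

Lemma lol_diam_lower : ~ reach G L (node 0) (node L.+1).
Proof. by move/lol_depth_reach; rewrite !inordK; lia. Qed.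

Lemma lollipop_diameter : has_diameter G L.+1.
Proof.
split; first exact: lol_diam_upper.
by exists (node 0), (node L.+1); exact: lol_diam_lower.
Qed.

Lemma lollipop_wf : wf_pgraph G.
Proof.
split.
- move=> v p Hp /(congr1 val); rewrite /= lol_nbrE //; exact: lol_nbr_neq.
- move=> v p p' Hp Hp' /(congr1 val); rewrite /= !lol_nbrE //; exact: lol_nbr_inj.
- move=> v p Hp; have [p' Hp' Hv] := lol_nbr_sym (ltn_ord v) Hp.
  by exists p'; rewrite /= lol_nbrE // Hv inord_val.
- by move=> u v; exists L.+1; apply: lol_diam_upper.
Qed.

End Lollipop.

Lemma lol_nbr_indep L q (sg1 sg2 : {ffun 'I_q -> {perm 'I_q}}) u p :
  u <= L -> lol_nbr L q sg1 u p = lol_nbr L q sg2 u p.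
Proof. by rewrite /lol_nbr leq_eqVlt => /orP [/eqP -> | ->]; rewrite ?ltnn ?eqxx. Qed.

(* Information travels at most one index per round, so the state of [u] after [t]
   rounds depends only on the nodes of index [<= u + t]. *)
Lemma run_eq_prefix S M (A : algo S M) n (G1 G2 : pgraph n) adv1 adv2 T :
  (forall u : 'I_n, u <= T -> deg G1 u = deg G2 u /\ adv1 u = adv2 u) ->
  (forall u : 'I_n, u < T -> forall p, p < deg G1 u ->
     [/\ nbr G1 u p = nbr G2 u p, rport G1 u p = rport G2 u p & nbr G1 u p <= u.+1]) ->
  forall t (u : 'I_n), u + t <= T -> run A G1 adv1 t u = run A G2 adv2 t u.
Proof.
move=> Hdeg Hnbr; elim=> [|t IH] u Hu /=; have [Ed Eadv] := Hdeg u (leq_trans (leq_addr _ _) Hu).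
  by rewrite Ed Eadv.
rewrite IH; last lia.
congr a_trans; rewrite -Ed; apply/eq_in_map => p; rewrite mem_iota /= => Hp.
have [E1 E2 E3] := Hnbr u ltac:(lia) p Hp.
by rewrite E1 E2 IH // -E1; lia.
Qed.

Lemma run_lollipop_endpoint S M (A : algo S M) L q (sg1 sg2 : {ffun 'I_q -> {perm 'I_q}})
    adv1 adv2 T : 0 < q -> T <= L ->
  (forall u : 'I_(L + q).+1, u <= T -> adv1 u = adv2 u) -> forall t, t <= T ->
  run A (lollipop L q sg1) adv1 t ord0 = run A (lollipop L q sg2) adv2 t ord0.
Proof.
move=> q_gt0 TL Hadv t Ht; apply: (@run_eq_prefix _ _ _ _ _ _ _ _ T) => //.
  by move=> u Hu; split => //; apply: Hadv.
move=> u Hu p Hp.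
have Hnbr : nbr (lollipop L q sg1) u p = nbr (lollipop L q sg2) u p.
  by rewrite /= (lol_nbr_indep sg1 sg2) //; lia.
have Hnbr_le : nbr (lollipop L q sg1) u p <= u.+1.
  by rewrite lol_nbrE // lol_nbr_path; [case: (p =P 0) | ]; lia.
split => //; rewrite /rport -Hnbr; apply: eq_find => p' /=.
by rewrite (lol_nbr_indep sg1 sg2) //; move: Hnbr_le => /=; lia.
Qed.

Definition port_hom n m (G : pgraph n) (H : pgraph m) (f : 'I_n -> 'I_m) : Prop :=
  forall v, deg H (f v) = deg G v /\
    forall p, p < deg G v -> nbr H (f v) p = f (nbr G v p).

Lemma lol_nbr_hubE L q sg p : 0 < q -> p < q ->
  nbr (lollipop L q sg) (inord L) p = inord (L + p.+1).
Proof.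
move=> q_gt0 Hp; have Hdeg : p < lol_deg L q (@inord (L + q) L).
  by rewrite inordK ?lol_deg_hub; [case: posnP; lia | lia].
by apply: ord_inj; rewrite lol_nbrE // !inordK ?lol_nbr_hub ?Hp //; lia.
Qed.

(* Both homomorphisms send the port-[p] neighbour [L+1+p] of the hub to the port-[p]
   neighbour of the common image of the hub, so they agree on the clique; since [f2]
   is injective, every clique port then leads to the same node in both graphs. *)
Lemma lollipop_hom_rigid L q (sg1 sg2 : {ffun 'I_q -> {perm 'I_q}}) m (H : pgraph m)
    (f1 f2 : 'I_(L + q).+1 -> 'I_m) :
  0 < q -> port_hom (lollipop L q sg1) H f1 -> port_hom (lollipop L q sg2) H f2 ->
  injective f2 -> f1 (inord L) = f2 (inord L) -> sg1 = sg2.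
Proof.
move=> q_gt0 hom1 hom2 inj2 Ehub.
have Hdeg sg p : p < q -> p < deg (lollipop L q sg) (inord L).
  by move=> Hp; rewrite /= inordK ?lol_deg_hub; [case: posnP; lia | lia].
have Eclique (c : 'I_(L + q).+1) : L <= c -> f1 c = f2 c.
  case: (ltngtP L c) => // Lc _; last by rewrite -(inord_val c) -Lc.
  have Hp : (c - L).-1 < q by have := ltn_ord c; lia.
  have -> : c = inord (L + (c - L).-1.+1) by apply: ord_inj; rewrite inordK; lia.
  rewrite -{1}(@lol_nbr_hubE L q sg1 _ q_gt0 Hp) -(@lol_nbr_hubE L q sg2 _ q_gt0 Hp).
  have [_ Hf1] := hom1 (inord L); have [_ Hf2] := hom2 (inord L).
  by rewrite -Hf1 ?Hdeg // -Hf2 ?Hdeg // Ehub.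
apply/ffunP => r; apply/permP => x; apply: val_inj => /=.
have Lu : L < L + r.+1 by lia.
have u_lt : L + r.+1 < (L + q).+1 by have := ltn_ord r; lia.
set u : 'I_(L + q).+1 := inord (L + r.+1).
have Hx : x < lol_deg L q u by rewrite inordK ?lol_deg_clique //; lia.
have Lnbr sg : L <= nbr (lollipop L q sg) u x.
  by rewrite lol_nbrE // lol_nbr_clique inordK //; lia.
have : nbr (lollipop L q sg1) u x = nbr (lollipop L q sg2) u x.
  apply: inj2; rewrite -Eclique ?Lnbr //.
  have [_ Hf1] := hom1 u; have [_ Hf2] := hom2 u.
  by rewrite -Hf1 // -Hf2 // Eclique //; rewrite inordK; lia.
move/(congr1 val); rewrite /= !lol_nbrE // !lol_nbr_clique !inordK //.
move/addnI/(can_inj (bumpK _)).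
by rewrite (_ : (L + r.+1 - L).-1 = r); [rewrite !port_permE | lia].
Qed.

Definition advice_code b (s : seq bool) : 'I_b.+1 * b.-tuple bool :=
  (inord (size s), [tuple nth false s i | i < b]).

Lemma advice_code_inj b s1 s2 : size s1 <= b -> size s2 <= b ->
  advice_code b s1 = advice_code b s2 -> s1 = s2.
Proof.
move=> H1 H2 E.
have := congr1 (fun c => nat_of_ord c.1) E; rewrite /= !inordK // => Esize.
apply: (@eq_from_nth _ false) => // i Hi; have Hib : i < b by lia.
by have := congr1 (fun c => tnth c.2 (Ordinal Hib)) E; rewrite /= !tnth_mktuple.
Qed.

Section AdviceCounting.
Variables (S M : Type) (A : algo S M) (L q T : nat).
Variable oracle : forall G : pgraph (L + q).+1, 'I_(L + q).+1 -> seq bool.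
Hypotheses (q_gt0 : 0 < q) (T_le_L : T <= L).
Local Notation G sg := (lollipop L q sg).
Local Notation adv sg := (oracle (lollipop L q sg)).

Definition hub_image (sg : {ffun 'I_q -> {perm 'I_q}}) (x : 'I_(L + q).+1) : Prop :=
  exists t (H : {m : nat & pgraph m}) (f : 'I_(L + q).+1 -> 'I_(projT1 H)),
  [/\ t <= T, forall t', t' < t -> a_out A (run A (G sg) (adv sg) t' ord0) = None,
      a_out A (run A (G sg) (adv sg) t ord0) = Some H,
      bijective f /\ port_hom (G sg) (projT2 H) f & nat_of_ord (f (inord L)) = x].

Lemma hub_image_exists sg : recognizes A (G sg) (adv sg) T -> exists x, hub_image sg x.
Proof.
case/(_ ord0) => t [Ht [Hnone [H [Hout [f [Hbij Hhom]]]]]].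
have Hx : f (inord L) < (L + q).+1.
  by have := bij_eq_card Hbij; rewrite !card_ord => ->.
by exists (Ordinal Hx), t, H, f.
Qed.

Lemma hub_image_inj sg1 sg2 x : (forall u : 'I_(L + q).+1, u <= T -> adv sg1 u = adv sg2 u) ->
  hub_image sg1 x -> hub_image sg2 x -> sg1 = sg2.
Proof.
move=> Hadv [t1 [H1 [f1 [Ht1 Hnone1 Hout1 [_ Hhom1] Hx1]]]].
move=> [t2 [H2 [f2 [Ht2 Hnone2 Hout2 [Hbij2 Hhom2] Hx2]]]].
have Erun := run_lollipop_endpoint A sg1 sg2 q_gt0 T_le_L Hadv.
have Et : t1 = t2.
  case: (ltngtP t1 t2) => // Hlt.
    by move: (Hnone2 _ Hlt); rewrite -Erun ?Hout1 //; lia.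
  by move: (Hnone1 _ Hlt); rewrite Erun ?Hout2 //; lia.
subst t2; move: Hout2; rewrite -Erun // Hout1 => -[EH]; subst H2.
apply: (lollipop_hom_rigid q_gt0 Hhom1 Hhom2 (bij_inj Hbij2)).
by apply: val_inj; rewrite /= Hx1 Hx2.
Qed.

Lemma advice_count : (forall sg, recognizes A (G sg) (adv sg) T) ->
  exists sg, let b := advice_size (adv sg) in
    q`! ^ q <= (b.+1 * 2 ^ b) ^ T.+1 * (L + q).+1.
Proof.
move=> Hrec; pose P := {ffun 'I_q -> {perm 'I_q}}.
have cardP : #|{: P}| = q`! ^ q by rewrite card_ffun card_Sn card_ord.
have [sg0 Eb] := @eq_bigmax P (fun sg => advice_size (adv sg))
  ltac:(by rewrite cardP expn_gt0 fact_gt0).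
exists sg0; rewrite /= -Eb; set b := \max_(sg : P) _.
have Hsize sg u : size (adv sg u) <= b.
  apply: (leq_trans _ (@leq_bigmax _ (fun sg : P => advice_size (adv sg)) sg)).
  exact: (@leq_bigmax _ (fun v => size (adv sg v)) u).
have [hub_of hub_ofP] : exists hub_of : P -> 'I_(L + q).+1, forall sg, hub_image sg (hub_of sg).
  exists (fun sg => proj1_sig
    (constructive_indefinite_description _ (hub_image_exists (Hrec sg)))).
  by move=> sg; exact: proj2_sig.
pose code (sg : P) := ([ffun i : 'I_T.+1 => advice_code b (adv sg (inord i))], hub_of sg).
have code_inj : injective code.
  move=> sg1 sg2 [/ffunP Eadv Ehub]; apply: hub_image_inj (hub_ofP sg1) _; last by rewrite Ehub.
  move=> u Hu; apply: advice_code_inj (Hsize _ _) (Hsize _ _) _.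
  by have := Eadv (inord u); rewrite !ffunE inordK // inord_val.
have := leq_card code code_inj.
by rewrite cardP card_prod card_ffun card_prod card_tuple card_bool !card_ord.
Qed.

End AdviceCounting.

Lemma expn_le_fact_add h j : h ^ j <= (h + j)`!.
Proof.
elim: j => [|j IH]; first by rewrite expn0 addn0 fact_gt0.
by rewrite expnS addnS factS; apply: leq_mul => //; lia.
Qed.

Lemma half_expn_le_fact q : q./2 ^ q./2 <= q`!.
Proof.
have Hq : q = q./2 + (q - q./2) by lia.
case: (posnP q./2) => [-> | h_gt0]; first by rewrite expn0 fact_gt0.
apply: leq_trans (_ : q./2 ^ (q - q./2) <= _); first by apply: leq_pexp2l => //; lia.
by have := expn_le_fact_add q./2 (q - q./2); rewrite -Hq.
Qed.

Lemma leq_of_sq_le s c h : s * s <= c * h -> c <= h -> s <= h.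
Proof.
move=> Hs Hc; rewrite leqNgt; apply/negP => Hhs.
have : c * h < s * s by apply: leq_ltn_trans (leq_mul Hc (leqnn h)) (ltn_mul Hhs Hhs).
by rewrite ltnNge Hs.
Qed.

Lemma perm_count_exponent q n T b l m :
  q`! ^ q <= (b.+1 * 2 ^ b) ^ T.+1 * n -> n < 2 ^ l.+1 -> 2 ^ m <= q./2 ->
  m * (q./2 * q) <= 2 * (b * T.+1) + l.+1.
Proof.
move=> Hcount Hn Hm.
have h_gt0 : 0 < q./2 by apply: leq_trans Hm; rewrite expn_gt0.
have hq_gt0 : 0 < q./2 * q by rewrite muln_gt0 h_gt0; lia.
rewrite -(leq_exp2l _ _ (ltnSn 1)).
have E1 : 2 ^ (m * (q./2 * q)) <= q`! ^ q.
  rewrite expnM; apply: leq_trans (_ : q./2 ^ (q./2 * q) <= _); first by rewrite leq_exp2r.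
  by rewrite expnM leq_exp2r; [exact: half_expn_le_fact | lia].
have E2 : b.+1 * 2 ^ b <= 2 ^ (b + b) by rewrite expnD leq_mul2r ltn_expl // orbT.
apply: leq_trans E1 (leq_trans Hcount _).
rewrite (_ : 2 * (b * T.+1) = (b + b) * T.+1) ?expnD ?expnM; last lia.
by apply: leq_mul (ltnW Hn); rewrite leq_exp2r.
Qed.

Lemma sq_log_bound N0 n q l m Y : 6 * N0 <= n -> n <= N0 * q -> q <= 3 * q./2 ->
  0 < l -> l <= 3 * m -> m * (q./2 * q) <= 2 * Y + l.+1 -> n * n * l <= 36 * N0 * N0 * Y.
Proof.
move=> Hn Hnq Hq Hl Hlm Hexp.
have Hsq : n * n * l <= 9 * (N0 * N0) * (m * (q./2 * q)).
  apply: leq_trans (_ : (N0 * q) * (N0 * q) * (3 * m) <= _); first exact: leq_mul (leq_mul _ _) _.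
  rewrite (_ : 9 * (N0 * N0) * (m * (q./2 * q)) = N0 * N0 * ((3 * q./2) * q * (3 * m))); last lia.
  rewrite (_ : N0 * q * (N0 * q) * (3 * m) = N0 * N0 * (q * q * (3 * m))); last lia.
  by rewrite !leq_mul.
have Hlog : 18 * (N0 * N0) * l.+1 <= n * n * l.
  apply: leq_trans (_ : (6 * N0) * (6 * N0) * l <= _); last exact: leq_mul (leq_mul _ _) _.
  by rewrite (_ : 6 * N0 * (6 * N0) * l = 18 * (N0 * N0) * (2 * l)); [rewrite leq_mul2l; lia | lia].
have := leq_trans Hsq (leq_mul (leqnn _) Hexp).
move: Hlog; set Z := N0 * N0; set W := n * n * l; nia.
Qed.

Lemma advice_lower_bound_nat N0 q n T b : 0 < N0 -> 36 * N0 * N0 <= n -> n <= N0 * q ->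
  q`! ^ q <= (b.+1 * 2 ^ b) ^ T.+1 * n -> n * n * trunc_log 2 n <= 36 * N0 * N0 * (b * T.+1).
Proof.
move=> N0_gt0 Hn Hnq Hcount; set l := trunc_log 2 n.
have Hl1 : 2 ^ l <= n by apply: trunc_logP; lia.
have Hl2 : n < 2 ^ l.+1 by apply: trunc_log_ltn.
have l_ge2 : 2 <= l.
  rewrite leqNgt; apply/negP => Hl; have := leq_trans Hl2 (leq_pexp2l (isT : 0 < 2) Hl); lia.
have Hq : 36 * N0 <= q by rewrite -(leq_pmul2l N0_gt0); lia.
have Hm : 2 ^ l./2 <= q./2.
  apply: (@leq_of_sq_le _ (3 * N0)); last lia.
  rewrite -expnD; apply: leq_trans (leq_pexp2l (isT : 0 < 2) _) (leq_trans Hl1 _); first lia.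
  by apply: leq_trans Hnq _; rewrite (mulnC 3) -mulnA leq_pmul2l //; lia.
have Hn6 : 6 * N0 <= n by nia.
apply: (sq_log_bound (q := q) (m := l./2)) => //; try lia.
exact: perm_count_exponent Hcount Hl2 Hm.
Qed.

Section RealBounds.
Local Open Scope R_scope.

Lemma INR_muln a b : INR (a * b) = INR a * INR b.
Proof. by rewrite -multE mult_INR. Qed.

Lemma INR_expn a j : INR (a ^ j) = INR a ^ j.
Proof. by elim: j => [|j IH] //=; rewrite expnS INR_muln IH. Qed.

(* That is, [n <= N0 * (n - D)]: the clique holds a fixed fraction of the nodes. *)
Lemma alpha_slack alpha : 0 < alpha < 1 -> exists2 N0, (0 < N0)%N &
  forall n D, INR D <= alpha * INR n -> (N0 * D + n <= N0 * n)%N.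
Proof.
move=> [alpha_gt0 alpha_lt1].
have [N0 HN0] := INR_archimed (1 - alpha) 1 ltac:(lra).
have N0_gt0 : (0 < N0)%N by case: N0 HN0 => //=; lra.
exists N0 => // n D HD; apply/leP/INR_le; rewrite -plusE plus_INR !INR_muln.
have Hn := pos_INR n; have HN0r := pos_INR N0.
have := Rmult_le_compat_l _ _ _ HN0r HD.
have : 0 <= (INR N0 * (1 - alpha) - 1) * INR n by apply: Rmult_le_pos => //; lra.
lra.
Qed.

Lemma log2R_lt n l : (0 < n)%N -> (n < 2 ^ l)%N -> log2R (INR n) < INR l.
Proof.
move=> n_gt0 Hn; have ln2 := ln_lt_2.
have Hln : ln (INR n) < INR l * ln 2.
  rewrite -ln_pow; last lra.
  apply: ln_increasing; first exact/lt_0_INR/ltP.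
  by rewrite -[2]/(INR 2) -INR_expn; apply/lt_INR/ltP.
rewrite /log2R (_ : INR 2 = 2) //.
apply: (Rmult_lt_reg_r (ln 2)); first lra.
by rewrite /Rdiv Rmult_assoc Rinv_l; lra.
Qed.

Lemma log2R_gt0 n : (1 < n)%N -> 0 < log2R (INR n).
Proof.
move=> n_gt1; rewrite /log2R (_ : INR 2 = 2) //; have := ln_lt_2.
have : ln 1 < ln (INR n) by apply: ln_increasing; [lra | exact: (lt_INR 1 n (ltP n_gt1))].
rewrite ln_1 => Hln ln2; apply: Rmult_lt_0_compat => //.
by apply: Rinv_0_lt_compat; lra.
Qed.

Lemma advice_bound_real K n U b : (0 < K)%N -> (2 <= n)%N -> (0 < U)%N ->
  (n * n * trunc_log 2 n <= K * (b * U))%N ->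
  / INR (2 * K) * (INR n ^ 2 * log2R (INR n)) / INR U <= INR b.
Proof.
move=> K_gt0 n_ge2 U_gt0 /leP/le_INR; rewrite !INR_muln (_ : INR 2 = 2) // => Hnat.
set l := trunc_log 2 n in Hnat.
have Hl : (1 <= l)%N by rewrite trunc_log_gt0.
have Hlog : log2R (INR n) <= 2 * INR l.
  apply: Rlt_le (Rlt_le_trans _ _ _ (log2R_lt _ (trunc_log_ltn _ _)) _); try lia.
  by rewrite S_INR -/l; have := le_INR 1 l (leP Hl); rewrite /=; lra.
have Kr : 0 < INR K by apply/lt_0_INR/ltP.
have Ur : 0 < INR U by apply/lt_0_INR/ltP.
have Hb := pos_INR b; have Hnr := pos_INR n; have Hl0 := pos_INR l.
have Hlog0 := log2R_gt0 n_ge2.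
have : INR n ^ 2 * log2R (INR n) <= 2 * INR K * INR U * INR b.
  apply: Rle_trans (_ : INR n ^ 2 * (2 * INR l) <= _); first by apply: Rmult_le_compat_l; nra.
  nra.
move=> Hreal; apply: (Rmult_le_reg_r (2 * INR K * INR U)); first nra.
rewrite (_ : / (2 * INR K) * (INR n ^ 2 * log2R (INR n)) / INR U * (2 * INR K * INR U)
  = INR n ^ 2 * log2R (INR n)); first lra.
by field; lra.
Qed.

End RealBounds.

Theorem theorem6p2 (alpha : R) (Ha : Rlt 0 alpha /\ Rlt alpha 1) :
  exists (c : R) (n0 : nat), Rlt 0 c /\
  forall (n D k : nat), n0 <= n -> 1 <= D -> Rle (INR D) (Rmult alpha (INR n)) ->
    0 < k -> k <= D ->
  forall (S M : Type) (A : algo S M)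
         (oracle : forall G : pgraph n, 'I_n -> seq bool),
    (forall G : pgraph n, wf_pgraph G -> has_diameter G D ->
       recognizes A G (oracle G) (D - k)) ->
    exists G : pgraph n, wf_pgraph G /\ has_diameter G D /\
      Rle (Rdiv (Rmult c (Rmult (pow (INR n) 2) (log2R (INR n)))) (INR (D - k + 1)))
          (INR (advice_size (oracle G))).
Proof.
have [N0 N0_gt0 slack] := alpha_slack Ha.
have K_gt0 : 0 < 36 * N0 * N0 by rewrite !muln_gt0 N0_gt0.
exists (Rinv (INR (2 * (36 * N0 * N0)))), (36 * N0 * N0); split.
  by apply/Rinv_0_lt_compat/lt_0_INR/ltP; rewrite muln_gt0.
move=> n [//|L] k Hn _ /slack HL Hk HkL S M A oracle Hrec.
have [q En] : exists q, n = (L + q).+1 by exists (n - L.+1); nia.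
subst n; have Hnq : (L + q).+1 <= N0 * q by nia.
have q_gt0 : 0 < q by nia.
have TL : L.+1 - k <= L by lia.
have [sg Hcount] := advice_count q_gt0 TL
  (fun sg => Hrec _ (lollipop_wf L sg q_gt0) (lollipop_diameter L sg q_gt0)).
exists (lollipop L q sg); split; first exact: lollipop_wf.
split; first exact: lollipop_diameter.
rewrite (_ : L.+1 - k + 1 = (L.+1 - k).+1); last lia.
apply: advice_bound_real => //; first lia.
exact: advice_lower_bound_nat N0_gt0 Hn Hnq Hcount.
Qed.
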